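(* (Monogamy of entanglement and local contextuality.) Fix a noncontextuality inequality (data $N$, ${\cal E}_n$, $x_n$ as in the context) and a dimension $d_0$. Let A be a $d_0$-level system, B any finite-dimensional system, and $\rho$ any state of AB with $\rho_\mathrm{A}=\operatorname{tr}_\mathrm{B}\rho$. Define $$E(\rho)\equiv\inf_{\{P_m,|\Psi_m\rangle\}}\sum_mP_m\Big(C^{max}_{d_0}-C_{d_0}\big(\operatorname{tr}_\mathrm{B}|\Psi_m\rangle\langle\Psi_m|\big)\Big),$$ the infimum being over all ensembles of probabilities $P_m$ and pure states $|\Psi_m\rangle$ of AB with $\sum_mP_m|\Psi_m\rangle\langle\Psi_m|=\rho$. Then $$E(\rho)+C_{d_0}(\rho_\mathrm{A})\le C^{max}_{d_0}.$$
   Context: A noncontextuality inequality is specified by an integer $N$, a finite family of subsets ${\cal E}_n\subseteq\{1,\dots,N\}$ and real coefficients $x_n$ such that $\max_{a\in\{\pm1\}^N}\sum_nx_n\prod_{k\in{\cal E}_n}a_k=1$. For a dimension $d$, ${\cal A}_d$ is the set of tuples $(A_1,\dots,A_N)$ of Hermitian operators on $\mathbb C^d$ with $A_k^2=I$ such that $[A_k,A_l]=0$ whenever $k,l$ belong to a common ${\cal E}_n$. For a density matrix $\omega$ on $\mathbb C^d$, $C_d(\omega)=\sup_{(A_k)\in{\cal A}_d}\operatorname{tr}\big(\omega\sum_nx_n\prod_{k\in{\cal E}_n}A_k\big)$, and $C^{max}_d$ is the supremum of $C_d$ over all density matrices on $\mathbb C^d$. (The function $E$ is the convex-roof entanglement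 monotone built from the entropies $S^{lc}_d$; on systems with $\dim A=d_0$ it takes the form given in the claim.) *)

From HB Require Import structures.
From mathcomp Require Import all_boot all_order all_algebra.
From mathcomp Require Import complex mxtens.
From mathcomp Require Import boolp classical_sets reals.
Set Implicit Arguments.
Unset Strict Implicit.
Unset Printing Implicit Defensive.
Import GRing.Theory Num.Theory.
Local Open Scope ring_scope.

Section QContext.
Variable R : realType.
Local Notation C := (R[i]).

Definition adjmx m n (A : 'M[C]_(m, n)) : 'M[C]_(n, m) := map_mx (@conjc R) A^T.

Definition hermitian d (A : 'M[C]_d) : Prop := adjmx A = A.

Definition psd d (A : 'M[C]_d) : Prop :=
  forall v : 'cV[C]_d, let z := (adjmx v *m A *m v) 0 0 in
    complex.Im z = 0 /\ 0 <= complex.Re z.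

Definition density d (A : 'M[C]_d) : Prop :=
  hermitian A /\ psd A /\ \tr A = 1.

Variables (N K : nat) (Es : 'I_K -> {set 'I_N}) (xs : 'I_K -> R).

Definition nc_value (a : 'I_N -> R) : R :=
  \sum_(n < K) xs n * \prod_(k in Es n) a k.

Definition pm1 (a : 'I_N -> R) : Prop := forall k, a k = 1 \/ a k = -1.

Definition nc_normalized : Prop :=
  (forall a, pm1 a -> nc_value a <= 1) /\ (exists2 a, pm1 a & nc_value a = 1).

Definition admissible d (A : 'I_N -> 'M[C]_d) : Prop :=
  (forall k, hermitian (A k) /\ A k *m A k = 1%:M) /\
  (forall n k l, k \in Es n -> l \in Es n -> A k *m A l = A l *m A k).

Definition nc_operator d (A : 'I_N -> 'M[C]_d) : 'M[C]_d :=
  \sum_(n < K) real_complex R (xs n) *: \big[@mulmx C d d d / 1%:M]_(k in Es n) A k.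

Definition Cval d (w : 'M[C]_d) : R :=
  sup [set r : R | exists A : 'I_N -> 'M[C]_d,
         admissible A /\ r = complex.Re (\tr (w *m nc_operator A))].

Definition Cmax d : R :=
  sup [set r : R | exists w : 'M[C]_d, density w /\ r = Cval w].

Definition ptraceB d0 dB (rho : 'M[C]_(d0 * dB)) : 'M[C]_d0 :=
  \matrix_(i, j) \sum_(k < dB) rho (mxtens_index (i, k)) (mxtens_index (j, k)).

Definition pure_ensemble D (rho : 'M[C]_D) M (P : 'I_M -> R) (psi : 'I_M -> 'cV[C]_D)
  : Prop :=
  (forall m, 0 <= P m) /\ \sum_(m < M) P m = 1 /\
  (forall m, adjmx (psi m) *m psi m = 1%:M) /\
  \sum_(m < M) real_complex R (P m) *: (psi m *m adjmx (psi m)) = rho.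

Definition Eroof d0 dB (rho : 'M[C]_(d0 * dB)) : R :=
  inf [set r : R | exists M (P : 'I_M -> R) (psi : 'I_M -> 'cV[C]_(d0 * dB)),
         pure_ensemble rho P psi /\
         r = \sum_(m < M) P m *
               (Cmax d0 - Cval (@ptraceB d0 dB (psi m *m adjmx (psi m))))].

End QContext.

Arguments ptraceB {R} d0 dB rho.
Arguments Eroof {R N K} Es xs d0 dB rho.
Arguments Cmax {R N K} Es xs d.
Arguments Cval {R N K} Es xs {d} w.

From Pilot Require Import Defs.
From HB Require Import structures.
From mathcomp Require Import all_boot all_order all_algebra.
From mathcomp Require Import complex mxtens.
From mathcomp Require Import boolp classical_sets reals.
From mathcomp Require Import ring lra.
Import Order.TTheory GRing.Theory Num.Theory.
Set Implicit Arguments.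
Unset Strict Implicit.
Unset Printing Implicit Defensive.
Local Open Scope classical_set_scope.
Local Open Scope ring_scope.
Local Open Scope complex_scope.

(* C_d(w) is a supremum of the functionals w |-> Re tr(w O_A), which are
   linear in w, so C_d is convex.  The partial trace is linear, hence for any
   decomposition rho = sum_m P_m |Psi_m><Psi_m| we get
   C(rho_A) <= sum_m P_m C(tr_B |Psi_m><Psi_m|), i.e. every term of the
   infimum defining E(rho) is at most C^max - C(rho_A).  The rest is making
   the suprema meaningful: products of admissible observables are unitary and
   the entries of a density matrix are bounded, so all the sets involved are
   bounded above. *)

Section ComplexParts.
Variable R : rcfType.
Implicit Types x y : R[i].

Lemma ReD x y : complex.Re (x + y) = complex.Re x + complex.Re y.
Proof. by case: x; case: y. Qed.

Lemma ImD x y : complex.Im (x + y) = complex.Im x + complex.Im y.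
Proof. by case: x; case: y. Qed.

Lemma ReM x y :
  complex.Re (x * y) = complex.Re x * complex.Re y - complex.Im x * complex.Im y.
Proof. by case: x => a b; case: y. Qed.

Lemma ImM x y :
  complex.Im (x * y) = complex.Re x * complex.Im y + complex.Im x * complex.Re y.
Proof. by case: x => a b; case: y. Qed.

Lemma Re_conj x : complex.Re (conjc x) = complex.Re x.
Proof. by case: x. Qed.

Lemma Im_conj x : complex.Im (conjc x) = - complex.Im x.
Proof. by case: x. Qed.

Lemma Re_realM (r : R) x : complex.Re (r%:C * x) = r * complex.Re x.
Proof. by case: x => a b; rewrite /= mul0r subr0. Qed.

Lemma Re_sum I (s : seq I) (P : pred I) (F : I -> R[i]) :
  complex.Re (\sum_(i <- s | P i) F i) = \sum_(i <- s | P i) complex.Re (F i).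
Proof. exact: (raddf_sum (@complex.Re R : Rcomplex R -> R)). Qed.

Lemma Im_sum I (s : seq I) (P : pred I) (F : I -> R[i]) :
  complex.Im (\sum_(i <- s | P i) F i) = \sum_(i <- s | P i) complex.Im (F i).
Proof. exact: (raddf_sum (@complex.Im R : Rcomplex R -> R)). Qed.

End ComplexParts.

Lemma norm_subMM_le (R : realFieldType) (p q x y : R) : x ^+ 2 + y ^+ 2 <= 1 ->
  `|p * x - q * y| <= `|p| + `|q|.
Proof.
rewrite !expr2 => Hxy.
have hx1 : -1 <= x by nra.
have hx2 : x <= 1 by nra.
have hy1 : -1 <= y by nra.
have hy2 : y <= 1 by nra.
rewrite ler_norml; have [hp|hp] := lerP 0 p; have [hq|hq] := lerP 0 q;
  rewrite ?(ger0_norm hp) ?(ltr0_norm hp) ?(ger0_norm hq) ?(ltr0_norm hq);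
  apply/andP; split; nra.
Qed.

Lemma mxtrace_sum (V : nmodType) n I (s : seq I) (P : pred I) (F : I -> 'M[V]_n) :
  \tr (\sum_(i <- s | P i) F i) = \sum_(i <- s | P i) \tr (F i).
Proof. exact: raddf_sum. Qed.

Section Matrices.
Variable R : realType.
Local Notation C := R[i].

Lemma adjmxM m n p (A : 'M[C]_(m, n)) (B : 'M[C]_(n, p)) :
  adjmx (A *m B) = adjmx B *m adjmx A.
Proof. by rewrite /adjmx trmx_mul map_mxM. Qed.

Lemma adjmx1 d : adjmx (1%:M : 'M[C]_d) = 1%:M.
Proof. by rewrite /adjmx trmx1 map_mx1. Qed.

Lemma hermitian_entry d (w : 'M[C]_d) a b : Defs.hermitian w -> w b a = conjc (w a b).
Proof. by move=> Hw; rewrite -{1}Hw !mxE. Qed.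

Lemma quadformE d (w : 'M[C]_d) (v : 'cV[C]_d) :
  (adjmx v *m w *m v) 0 0 = \sum_a \sum_b conjc (v a 0) * w a b * v b 0.
Proof.
rewrite mxE exchange_big; apply: eq_bigr => b _.
by rewrite mxE mulr_suml; apply: eq_bigr => a _; rewrite !mxE.
Qed.

Definition unitary d (U : 'M[C]_d) : Prop := adjmx U *m U = 1%:M.

Lemma unitary1 d : unitary (1%:M : 'M[C]_d).
Proof. by rewrite /unitary adjmx1 mul1mx. Qed.

Lemma unitaryM d (U V : 'M[C]_d) : unitary U -> unitary V -> unitary (U *m V).
Proof.
rewrite /unitary adjmxM => hU hV.
by rewrite mulmxA -(mulmxA (adjmx V)) hU mulmx1 hV.
Qed.

(* The (b, b) entry of U^* U = 1 is the squared norm of column b. *)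
Lemma unitary_entry_le1 d (U : 'M[C]_d) a b : unitary U ->
  complex.Re (U a b) ^+ 2 + complex.Im (U a b) ^+ 2 <= 1.
Proof.
move=> HU; have : complex.Re ((adjmx U *m U) b b) = 1 by rewrite HU mxE eqxx.
rewrite mxE Re_sum (bigD1 a) //= !mxE ReM Re_conj Im_conj => <-.
rewrite -[leLHS]addr0 lerD //; first by rewrite !expr2; lra.
apply: sumr_ge0 => i _; rewrite !mxE ReM Re_conj Im_conj.
have := sqr_ge0 (complex.Re (U i b)); have := sqr_ge0 (complex.Im (U i b)).
by rewrite !expr2; lra.
Qed.

Definition l1_mxnorm d (w : 'M[C]_d) : R :=
  \sum_a \sum_b (`|complex.Re (w a b)| + `|complex.Im (w a b)|).

Lemma Re_trace_unitary_le d (w U : 'M[C]_d) : unitary U ->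
  `|complex.Re (\tr (w *m U))| <= l1_mxnorm w.
Proof.
move=> HU; rewrite /mxtrace Re_sum.
apply: (le_trans (ler_norm_sum _ _ _)); apply: ler_sum => a _.
rewrite mxE Re_sum.
apply: (le_trans (ler_norm_sum _ _ _)); apply: ler_sum => b _.
by rewrite ReM; apply: norm_subMM_le; exact: unitary_entry_le1.
Qed.

Lemma sum_mul_delta2 d (G : 'I_d -> C) a b (t : C) :
  \sum_c G c * ((c == a)%:R + (c == b)%:R * t) = G a + G b * t.
Proof.
have pick e : \sum_c G c * (c == e)%:R = G e.
  by rewrite (bigD1 e) //= eqxx mulr1 big1 ?addr0 // => c /negbTE ->; rewrite mulr0.
rewrite -[G a]pick -[G b]pick mulr_suml -big_split /=.
by apply: eq_bigr => c _; ring.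
Qed.

Lemma quadform_pair d (w : 'M[C]_d) a b (s : C) :
  let v := \col_c ((c == a)%:R + (c == b)%:R * s) in
  (adjmx v *m w *m v) 0 0 = w a a + w a b * s + conjc s * (w b a + w b b * s).
Proof.
rewrite /= quadformE.
transitivity (\sum_c (w c a + w c b * s) * ((c == a)%:R + (c == b)%:R * conjc s)).
  apply: eq_bigr => c _; rewrite -(sum_mul_delta2 (w c)) mulr_suml.
  apply: eq_bigr => e _; rewrite !mxE rmorphD rmorphM /= !conjc_nat; ring.
by rewrite sum_mul_delta2; ring.
Qed.

Lemma psd_pair d (w : 'M[C]_d) a b (x y : R) : Defs.hermitian w -> psd w ->
  0 <= complex.Re (w a a) + (x ^+ 2 + y ^+ 2) * complex.Re (w b b)
       + 2 * (x * complex.Re (w a b) - y * complex.Im (w a b)).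
Proof.
move=> Hh /(_ (\col_c ((c == a)%:R + (c == b)%:R * Complex x y))) [_].
rewrite quadform_pair (hermitian_entry a b Hh).
rewrite !(ReD, ImD, ReM, ImM, Re_conj, Im_conj) /= => H.
by apply: (le_trans H); rewrite le_eqVlt; apply/predU1P; left; ring.
Qed.

(* Test the positivity of w on e_a + s e_b for s = 1, -1, i, -i. *)
Lemma density_entry_le d (w : 'M[C]_d) a b : density w ->
  `|complex.Re (w a b)| + `|complex.Im (w a b)|
    <= complex.Re (w a a) + complex.Re (w b b).
Proof.
move=> [Hh [Hp _]].
have := psd_pair a b 1 0 Hh Hp; have := psd_pair a b (-1) 0 Hh Hp.
have := psd_pair a b 0 1 Hh Hp; have := psd_pair a b 0 (-1) Hh Hp.
rewrite ?expr0n ?expr1n ?sqrrN ?expr1n /=.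
set p := complex.Re (w a b); set q := complex.Im (w a b).
have [hp|hp] := lerP 0 p; have [hq|hq] := lerP 0 q;
  rewrite ?(ger0_norm hp) ?(ltr0_norm hp) ?(ger0_norm hq) ?(ltr0_norm hq); lra.
Qed.

Lemma l1_mxnorm_density_le d (w : 'M[C]_d) : density w -> l1_mxnorm w <= d%:R *+ 2.
Proof.
move=> Hw; have trw : \sum_a complex.Re (w a a) = 1.
  by case: Hw => [_ [_ trw]]; rewrite -Re_sum -[\sum_a _]/(\tr w) trw.
apply: (le_trans (y := \sum_a \sum_b (complex.Re (w a a) + complex.Re (w b b)))).
  by apply: ler_sum => a _; apply: ler_sum => b _; exact: density_entry_le.
under eq_bigr => a _ do rewrite big_split /= sumr_const card_ord trw.
by rewrite big_split /= sumrMnl trw sumr_const card_ord mulr2n.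
Qed.

End Matrices.

Lemma big_mxtens_index (V : nmodType) m n (F : 'I_(m * n) -> V) :
  \sum_p F p = \sum_(i < m) \sum_(k < n) F (mxtens_index (i, k)).
Proof.
rewrite pair_big /= (reindex (@mxtens_index m n)) /=; last first.
  by exists (@mxtens_unindex m n) => p _; [apply: mxtens_indexK | apply: mxtens_unindexK].
by apply: eq_bigr => -[i k].
Qed.

Section PartialTrace.
Variable R : realType.
Local Notation C := R[i].
Variables d0 dB : nat.
Implicit Types rho : 'M[C]_(d0 * dB).

Lemma ptraceB_hermitian rho : Defs.hermitian rho -> Defs.hermitian (ptraceB d0 dB rho).
Proof.
move=> Hrho; apply/matrixP => i j; rewrite !mxE rmorph_sum; apply: eq_bigr => k _.
rewrite (hermitian_entry (mxtens_index (i, k)) (mxtens_index (j, k)) Hrho).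
exact: conjcK.
Qed.

Lemma ptraceB_trace rho : \tr (ptraceB d0 dB rho) = \tr rho.
Proof. by rewrite /mxtrace [RHS]big_mxtens_index; apply: eq_bigr => i _; rewrite mxE. Qed.

Definition tens_delta (v : 'cV[C]_d0) (k : 'I_dB) : 'cV[C]_(d0 * dB) :=
  \col_p (((mxtens_unindex p).2 == k)%:R * v (mxtens_unindex p).1 0).

Lemma tens_delta_diag v k a : tens_delta v k (mxtens_index (a, k)) 0 = v a 0.
Proof. by rewrite mxE mxtens_indexK eqxx mul1r. Qed.

Lemma tens_delta_off v k a l : l != k -> tens_delta v k (mxtens_index (a, l)) 0 = 0.
Proof. by rewrite mxE mxtens_indexK => /negbTE /= ->; rewrite mul0r. Qed.

Lemma quadform_tens_delta rho v k :
  (adjmx (tens_delta v k) *m rho *m tens_delta v k) 0 0 =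
  \sum_a \sum_b conjc (v a 0) * rho (mxtens_index (a, k)) (mxtens_index (b, k)) * v b 0.
Proof.
rewrite quadformE big_mxtens_index; apply: eq_bigr => a _.
rewrite (bigD1 k) //= [X in _ + X]big1 ?addr0; last first.
  by move=> l hl; apply: big1 => q _; rewrite tens_delta_off // rmorph0 !mul0r.
rewrite big_mxtens_index; apply: eq_bigr => b _.
rewrite (bigD1 k) //= [X in _ + X]big1 ?addr0; last first.
  by move=> l hl; rewrite (@tens_delta_off v k b l hl) mulr0.
by rewrite !tens_delta_diag.
Qed.

Lemma quadform_ptraceB rho v :
  (adjmx v *m ptraceB d0 dB rho *m v) 0 0 =
  \sum_k (adjmx (tens_delta v k) *m rho *m tens_delta v k) 0 0.
Proof.
under [RHS]eq_bigr => k _ do rewrite quadform_tens_delta.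
rewrite quadformE [RHS]exchange_big; apply: eq_bigr => a _.
rewrite [RHS]exchange_big; apply: eq_bigr => b _.
by rewrite mxE mulr_sumr mulr_suml.
Qed.

Lemma ptraceB_psd rho : psd rho -> psd (ptraceB d0 dB rho).
Proof.
move=> Hrho v /=; rewrite quadform_ptraceB Re_sum Im_sum; split.
  by apply: big1 => k _; have [] := Hrho (tens_delta v k).
by apply: sumr_ge0 => k _; have [] := Hrho (tens_delta v k).
Qed.

Lemma ptraceB_density rho : density rho -> density (ptraceB d0 dB rho).
Proof.
case=> [Hh [Hp Ht]]; split; first exact: ptraceB_hermitian.
by split; [exact: ptraceB_psd | rewrite ptraceB_trace].
Qed.

Lemma ptraceB_sum M (c : 'I_M -> C) (X : 'I_M -> 'M[C]_(d0 * dB)) :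
  ptraceB d0 dB (\sum_m c m *: X m) = \sum_m c m *: ptraceB d0 dB (X m).
Proof.
apply/matrixP => i j; rewrite mxE summxE.
under eq_bigr => k _ do rewrite summxE.
rewrite exchange_big; apply: eq_bigr => m _.
by rewrite !mxE mulr_sumr; apply: eq_bigr => k _; rewrite mxE.
Qed.

End PartialTrace.

Section Contextuality.
Variable R : realType.
Local Notation C := R[i].
Variables (N K : nat) (Es : 'I_K -> {set 'I_N}) (xs : 'I_K -> R).

Definition obs_prod d (A : 'I_N -> 'M[C]_d) n : 'M[C]_d :=
  \big[@mulmx C d d d / 1%:M]_(k in Es n) A k.

Lemma admissible1 d : admissible Es (fun=> 1%:M : 'M[C]_d).
Proof. by split=> [k|//]; rewrite /Defs.hermitian adjmx1 mul1mx. Qed.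

Lemma obs_prod_unitary d (A : 'I_N -> 'M[C]_d) n :
  admissible Es A -> unitary (obs_prod A n).
Proof.
case=> HA _; apply: big_ind; [exact: unitary1 | exact: unitaryM | move=> k _].
by case: (HA k) => Hh HA2; rewrite /unitary Hh.
Qed.

Lemma Re_trace_nc_operator d (w : 'M[C]_d) (A : 'I_N -> 'M[C]_d) :
  complex.Re (\tr (w *m nc_operator Es xs A)) =
  \sum_n xs n * complex.Re (\tr (w *m obs_prod A n)).
Proof.
rewrite mulmx_sumr mxtrace_sum Re_sum; apply: eq_bigr => n _.
by rewrite -scalemxAr mxtraceZ Re_realM.
Qed.

Definition nc_bound d (w : 'M[C]_d) : R := (\sum_n `|xs n|) * l1_mxnorm w.

Lemma Re_trace_nc_operator_le d (w : 'M[C]_d) (A : 'I_N -> 'M[C]_d) :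
  admissible Es A -> complex.Re (\tr (w *m nc_operator Es xs A)) <= nc_bound w.
Proof.
move=> HA; rewrite Re_trace_nc_operator /nc_bound mulr_suml; apply: ler_sum => n _.
apply: (le_trans (ler_norm _)); rewrite normrM; apply: ler_wpM2l => //.
exact/Re_trace_unitary_le/obs_prod_unitary.
Qed.

Lemma Re_trace_le_Cval d (w : 'M[C]_d) (A : 'I_N -> 'M[C]_d) : admissible Es A ->
  complex.Re (\tr (w *m nc_operator Es xs A)) <= Cval Es xs w.
Proof.
move=> HA; apply: ub_le_sup; last by exists A.
by exists (nc_bound w) => _ [B [HB ->]]; exact: Re_trace_nc_operator_le.
Qed.

Lemma Cval_le_nc_bound d (w : 'M[C]_d) : Cval Es xs w <= nc_bound w.
Proof.
apply: ge_sup; first by eexists; exists (fun=> 1%:M); split; [exact: admissible1 | ].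
by move=> _ [A [HA ->]]; exact: Re_trace_nc_operator_le.
Qed.

Lemma Cval_le_Cmax d (w : 'M[C]_d) : density w -> Cval Es xs w <= Cmax Es xs d.
Proof.
move=> Hw; apply: ub_le_sup; last by exists w.
exists ((\sum_n `|xs n|) * d%:R *+ 2) => _ [w' [Hw' ->]].
apply: le_trans (Cval_le_nc_bound w') _; rewrite -mulrnAr.
by apply: ler_wpM2l; [exact: sumr_ge0 | exact: l1_mxnorm_density_le].
Qed.

Lemma Cval_convex d M (P : 'I_M -> R) (Y : 'I_M -> 'M[C]_d) : (forall m, 0 <= P m) ->
  Cval Es xs (\sum_m (P m)%:C *: Y m) <= \sum_m P m * Cval Es xs (Y m).
Proof.
move=> P_ge0; apply: ge_sup; first by eexists; exists (fun=> 1%:M); split; [exact: admissible1 | ].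
move=> _ [A [HA ->]]; rewrite mulmx_suml mxtrace_sum Re_sum; apply: ler_sum => m _.
by rewrite -scalemxAl mxtraceZ Re_realM ler_wpM2l // Re_trace_le_Cval.
Qed.

Lemma convex_roof_term_le d0 dB M (P : 'I_M -> R) (Y : 'I_M -> 'M[C]_(d0 * dB)) c :
  (forall m, 0 <= P m) -> \sum_m P m = 1 ->
  \sum_m P m * (c - Cval Es xs (ptraceB d0 dB (Y m)))
    <= c - Cval Es xs (ptraceB d0 dB (\sum_m (P m)%:C *: Y m)).
Proof.
move=> P_ge0 P_sum1; rewrite ptraceB_sum.
under eq_bigr => m _ do rewrite mulrBr.
by rewrite sumrB -mulr_suml P_sum1 mul1r lerD2l lerN2 Cval_convex.
Qed.

End Contextuality.

(* [inf S] is 0 when [S] has no infimum, hence the hypothesis [0 <= u]. *)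
Lemma inf_le_ubound (R : realType) (S : set R) (u : R) :
  0 <= u -> ubound S u -> inf S <= u.
Proof.
move=> u_ge0 Su; have [[[r Sr] lbS]|noinf] := pselect (has_inf S).
  exact: le_trans (ge_inf lbS Sr) (Su r Sr).
by rewrite inf_out.
Qed.

Theorem mainTheorem5 (R : realType) (N K : nat) (Es : 'I_K -> {set 'I_N})
  (xs : 'I_K -> R) (Hnc : nc_normalized Es xs) (d0 dB : nat)
  (rho : 'M[R[i]]_(d0 * dB)) (Hrho : density rho) :
  Eroof Es xs d0 dB rho + Cval Es xs (ptraceB d0 dB rho) <= Cmax Es xs d0.
Proof.
have CA_le_Cmax := Cval_le_Cmax Es xs (ptraceB_density Hrho).
rewrite -lerBrDr; apply: inf_le_ubound; first by rewrite subr_ge0.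
move=> _ [M [P [psi [[P_ge0 [P_sum1 [_ <-]]] ->]]]].
exact: convex_roof_term_le.
Qed.
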